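(* Let $D>0$, $n\ge1$, and let $V:S^1\to\mathbb R$ be continuous, odd and $\tfrac1n$-periodic. Then every nonnegative ($\mathcal C^2$) stationary solution $f$ of (TP) with $\int_{S^1}f=1$ is $\tfrac1n$-periodic.
   Context: $S^1=\mathbb R/\mathbb Z$; $(V*f)(\theta)=\int_{S^1}V(\theta-\psi)f(\psi)d\psi$. Equation (TP): $\partial_tf=D\partial_\theta^2f+\partial_\theta((V*f)f)$; a stationary solution is a time-independent solution. *)

From Stdlib Require Import Reals ClassicalEpsilon.
Open Scope R_scope.

(* Functions on S^1 = R/Z are represented as 1-periodic functions R -> R. *)
Definition periodic_with (p : R) (g : R -> R) : Prop :=
  forall x : R, g (x + p) = g x.

Definition on_circle (g : R -> R) : Prop := periodic_with 1 g.

Definition IsInt (F : R -> R) (a b I : R) : Prop :=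
  exists pr : Riemann_integrable F a b, RiemannInt pr = I.

(* Riemann integral over [a,b] (an arbitrary value if F is not integrable). *)
Definition Rint (F : R -> R) (a b : R) : R :=
  epsilon (inhabits 0) (fun I => IsInt F a b I).

(* (V * f)(theta) = int_{S^1} V(theta - psi) f(psi) dpsi, S^1 = [0,1). *)
Definition conv (V f : R -> R) (theta : R) : R :=
  Rint (fun psi => V (theta - psi) * f psi) 0 1.

Definition C2_with (f f1 f2 : R -> R) : Prop :=
  (forall x, derivable_pt_lim f x (f1 x)) /\
  (forall x, derivable_pt_lim f1 x (f2 x)) /\
  continuity f2.

(* f is a C^2 stationary solution of (TP):
   0 = D f'' + d/dtheta ((V*f) f). *)
Definition stationary_TP (D : R) (V f : R -> R) : Prop :=
  exists f1 f2 h : R -> R,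
    C2_with f f1 f2 /\
    (forall x, derivable_pt_lim (fun t => conv V f t * f t) x (h x)) /\
    (forall x, D * f2 x + h x = 0).

(* Write c = 1/n and W = V * f.  The proof is an ODE uniqueness argument:
   1. The stationary equation says that F = D f' + W f has zero derivative,
      so F is constant (a first integral).
   2. W is c-periodic because V is.  Comparing F at x and at x + c shows that
      the shift difference u(x) = f(x + c) - f(x) solves the linear equation
      D u' = - W u.
   3. u has a zero: otherwise u has a constant sign by the intermediate value
      theorem, while u(0) + u(c) + ... + u((n-1)c) = f(1) - f(0) = 0.
   4. W is bounded on compact intervals, so by a Gronwall estimate on
      u^2 e^{+-Lx} a solution of D u' = - W u vanishing at one point vanishes
      everywhere.  Hence f(x + c) = f(x) for all x. *)

From Stdlib Require Import Reals Lra Lia ClassicalEpsilon FunctionalExtensionality Classical.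
Open Scope R_scope.

Lemma derivable_pt_lim_shift (g g' : R -> R) (c x : R) :
  (forall y, derivable_pt_lim g y (g' y)) ->
  derivable_pt_lim (fun y => g (y + c)) x (g' (x + c)).
Proof.
  intros Hg.
  assert (Htr : derivable_pt_lim (fun y => y + c) x 1).
  { replace 1 with (1 + 0) by ring.
    exact (derivable_pt_lim_plus id (fct_cte c) x 1 0
             (derivable_pt_lim_id x) (derivable_pt_lim_const c x)). }
  replace (g' (x + c)) with (g' (x + c) * 1) by ring.
  exact (derivable_pt_lim_comp _ g x 1 _ Htr (Hg _)).
Qed.

Lemma derivable_pt_lim_exp_scal (K x : R) :
  derivable_pt_lim (fun y => exp (K * y)) x (K * exp (K * x)).
Proof.
  assert (Hlin : derivable_pt_lim (fun y => K * y) x K).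
  { pose proof (derivable_pt_lim_scal id K x 1 (derivable_pt_lim_id x)) as P.
    rewrite Rmult_1_r in P. exact P. }
  rewrite Rmult_comm.
  exact (derivable_pt_lim_comp _ exp x K _ Hlin (derivable_pt_lim_exp _)).
Qed.

Lemma continuity_of_derivative (g g' : R -> R) :
  (forall x, derivable_pt_lim g x (g' x)) -> continuity g.
Proof. intros Hg x. apply derivable_continuous_pt. exists (g' x). exact (Hg x). Qed.

Lemma zero_derivative_constant (F F' : R -> R) :
  (forall x, derivable_pt_lim F x (F' x)) -> (forall x, F' x = 0) ->
  forall x y, F x = F y.
Proof.
  intros HF H0.
  assert (Hlt : forall x y, x < y -> F x = F y).
  { intros x y Hxy.
    destruct (MVT_cor2 F F' x y Hxy (fun z _ => HF z)) as [z [Hz _]].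
    rewrite H0 in Hz. lra. }
  intros x y. destruct (Rtotal_order x y) as [H | [H | H]].
  - now apply Hlt.
  - now subst.
  - symmetry. now apply Hlt.
Qed.

Lemma weighted_decrease (q q' : R -> R) (K x y : R) :
  (forall z, derivable_pt_lim q z (q' z)) -> x < y ->
  (forall z, x <= z <= y -> q' z + K * q z <= 0) ->
  q y * exp (K * y) <= q x * exp (K * x).
Proof.
  intros Hq Hxy Hle.
  set (s := fun z => q z * exp (K * z)).
  assert (Hs : forall z, derivable_pt_lim s z ((q' z + K * q z) * exp (K * z))).
  { intro z.
    replace ((q' z + K * q z) * exp (K * z))
      with (q' z * exp (K * z) + q z * (K * exp (K * z))) by ring.
    exact (derivable_pt_lim_mult q (fun z => exp (K * z)) z _ _
             (Hq z) (derivable_pt_lim_exp_scal K z)). }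
  destruct (MVT_cor2 s _ x y Hxy (fun z _ => Hs z)) as [z [Hz Hzxy]].
  assert (Hneg : (q' z + K * q z) * exp (K * z) <= 0).
  { pose proof (exp_pos (K * z)). pose proof (Hle z ltac:(lra)). nra. }
  unfold s in Hz. nra.
Qed.

Lemma gronwall_nonneg (q q' : R -> R) (L a b t0 : R) :
  (forall z, derivable_pt_lim q z (q' z)) ->
  (forall z, a <= z <= b -> Rabs (q' z) <= L * q z) ->
  (forall z, 0 <= q z) ->
  a <= t0 <= b -> q t0 = 0 -> forall x, a <= x <= b -> q x = 0.
Proof.
  intros Hq Hb Hpos Ht0 Hz x Hx.
  apply Rle_antisym; [| apply Hpos].
  destruct (Rtotal_order t0 x) as [Hlt | [Heq | Hgt]].
  - (* forward in time: q e^{-L z} does not increase *)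
    assert (Hw := weighted_decrease q q' (- L) t0 x Hq Hlt).
    assert (Hdec : q x * exp (- L * x) <= q t0 * exp (- L * t0)).
    { apply Hw. intros z Hzi.
      pose proof (Rle_abs (q' z)). pose proof (Hb z ltac:(lra)). lra. }
    rewrite Hz in Hdec. pose proof (exp_pos (- L * x)). nra.
  - subst. lra.
  - (* backward in time: q e^{L z} does not decrease *)
    assert (Hw := weighted_decrease (fun z => - q z) (fun z => - q' z) L x t0
                    (fun z => derivable_pt_lim_opp q z _ (Hq z)) Hgt).
    assert (Hinc : - q t0 * exp (L * t0) <= - q x * exp (L * x)).
    { apply Hw. intros z Hzi.
      pose proof (Rle_abs (- q' z)) as Hopp; rewrite Rabs_Ropp in Hopp. pose proof (Hb z ltac:(lra)). lra. }
    rewrite Hz in Hinc. pose proof (exp_pos (L * x)). nra.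
Qed.

(* Gronwall for a linear differential inequality |u'| <= K |u| (step 4),
   applied to q = u^2. *)
Lemma gronwall_linear (u u' : R -> R) (K a b t0 : R) :
  (forall z, derivable_pt_lim u z (u' z)) ->
  (forall z, a <= z <= b -> Rabs (u' z) <= K * Rabs (u z)) ->
  a <= t0 <= b -> u t0 = 0 -> forall x, a <= x <= b -> u x = 0.
Proof.
  intros Hu Hb Ht0 Hz x Hx.
  assert (Hsq : forall z, derivable_pt_lim (fun y => u y * u y) z (2 * u z * u' z)).
  { intro z. replace (2 * u z * u' z) with (u' z * u z + u z * u' z) by ring.
    exact (derivable_pt_lim_mult u u z _ _ (Hu z) (Hu z)). }
  assert (Hsqb : forall z, a <= z <= b ->
            Rabs (2 * u z * u' z) <= 2 * K * (u z * u z)).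
  { intros z Hzi.
    assert (Habs : Rabs (u z) * Rabs (u z) = u z * u z).
    { rewrite <- Rabs_mult. apply Rabs_pos_eq. nra. }
    pose proof (Rmult_le_compat_l _ _ _ (Rabs_pos (u z)) (Hb z Hzi)).
    rewrite !Rabs_mult, (Rabs_pos_eq 2), <- Habs by lra. lra. }
  assert (Hq0 : u x * u x = 0).
  { apply (gronwall_nonneg _ _ (2 * K) a b t0 Hsq Hsqb); auto.
    - intro z. nra.
    - rewrite Hz. ring. }
  destruct (Rmult_integral _ _ Hq0); assumption.
Qed.

Lemma linear_ode_zero (D : R) (u u' W : R -> R) (t0 : R) :
  0 < D ->
  (forall z, derivable_pt_lim u z (u' z)) ->
  (forall z, D * u' z = - W z * u z) ->
  (forall a b, a <= b -> exists M, forall z, a <= z <= b -> Rabs (W z) <= M) ->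
  u t0 = 0 -> forall x, u x = 0.
Proof.
  intros HD Hu Hode Hbdd Hz x.
  set (a := Rmin t0 x). set (b := Rmax t0 x).
  assert (Hab : a <= b) by (unfold a, b; apply Rle_trans with t0;
                              [apply Rmin_l | apply Rmax_l]).
  destruct (Hbdd a b Hab) as [M HM].
  apply (gronwall_linear u u' (M / D) a b t0 Hu).
  - intros z Hzi.
    assert (E : u' z = - W z * u z / D) by (rewrite <- Hode; field; lra).
    rewrite E. unfold Rdiv. rewrite !Rabs_mult, Rabs_Ropp.
    rewrite (Rabs_pos_eq (/ D)) by (apply Rlt_le, Rinv_0_lt_compat; lra).
    replace (M * / D * Rabs (u z)) with (M * Rabs (u z) * / D) by ring.
    apply Rmult_le_compat_r; [apply Rlt_le, Rinv_0_lt_compat; lra |].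
    apply Rmult_le_compat_r; [apply Rabs_pos | exact (HM z Hzi)].
  - unfold a, b. split; [apply Rmin_l | apply Rmax_l].
  - exact Hz.
  - unfold a, b. split; [apply Rmin_r | apply Rmax_r].
Qed.

Lemma continuous_bounded_on (g : R -> R) (a b : R) :
  a <= b -> continuity g ->
  exists M, 0 <= M /\ forall x, a <= x <= b -> Rabs (g x) <= M.
Proof.
  intros Hab Hg.
  destruct (continuity_ab_maj (fun x => Rabs (g x)) a b Hab) as [m [Hm _]].
  { intros z _. change (continuity_pt (comp Rabs g) z).
    apply continuity_pt_comp; [apply Hg | apply Rcontinuity_abs]. }
  exists (Rabs (g m)). split; [apply Rabs_pos | exact Hm].
Qed.

Lemma RiemannInt_abs_le (g : R -> R) (a b M : R) (pr : Riemann_integrable g a b) :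
  a <= b -> (forall x, a < x < b -> Rabs (g x) <= M) ->
  Rabs (RiemannInt pr) <= M * (b - a).
Proof.
  intros Hab Hg.
  pose proof (RiemannInt_P19 pr (RiemannInt_P14 a b M) Hab) as Hup.
  pose proof (RiemannInt_P19 (RiemannInt_P14 a b (- M)) pr Hab) as Hlow.
  rewrite RiemannInt_P15 in Hup, Hlow. unfold fct_cte in Hup, Hlow.
  apply Rabs_le. split.
  - assert (- M * (b - a) <= RiemannInt pr)
      by (apply Hlow; intros x Hx; pose proof (Rle_abs (- g x)) as Hopp; rewrite Rabs_Ropp in Hopp; pose proof (Hg x Hx); lra).
    lra.
  - apply Hup. intros x Hx. pose proof (Rle_abs (g x)). pose proof (Hg x Hx). lra.
Qed.

Lemma conv_integrand_continuous (V f : R -> R) (th : R) :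
  continuity V -> continuity f -> continuity (fun psi => V (th - psi) * f psi).
Proof.
  intros HV Hf x.
  change (continuity_pt (mult_fct (comp V (fun psi => th - psi)) f) x).
  apply continuity_pt_mult; [| apply Hf].
  apply continuity_pt_comp; [| apply HV].
  change (continuity_pt (minus_fct (fct_cte th) id) x).
  apply continuity_pt_minus.
  - apply continuity_pt_const. intros y z; reflexivity.
  - apply derivable_continuous_pt, derivable_pt_id.
Qed.

Lemma conv_IsInt (V f : R -> R) (th : R) :
  continuity V -> continuity f ->
  IsInt (fun psi => V (th - psi) * f psi) 0 1 (conv V f th).
Proof.
  intros HV Hf. unfold conv, Rint. apply epsilon_spec.
  assert (pr : Riemann_integrable (fun psi => V (th - psi) * f psi) 0 1).
  { apply continuity_implies_RiemannInt; [lra |].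
    intros; apply conv_integrand_continuous; auto. }
  exists (RiemannInt pr), pr. reflexivity.
Qed.

Lemma conv_bounded (V f : R -> R) (a b : R) :
  continuity V -> continuity f -> a <= b ->
  exists M, forall th, a <= th <= b -> Rabs (conv V f th) <= M.
Proof.
  intros HV Hf Hab.
  destruct (continuous_bounded_on V (a - 1) b ltac:(lra) HV) as [MV [HMV HVb]].
  destruct (continuous_bounded_on f 0 1 ltac:(lra) Hf) as [Mf [HMf Hfb]].
  exists (MV * Mf * (1 - 0)). intros th Hth.
  destruct (conv_IsInt V f th HV Hf) as [pr <-].
  apply RiemannInt_abs_le; [lra |].
  intros x Hx. rewrite Rabs_mult.
  apply Rmult_le_compat; try apply Rabs_pos.
  - apply HVb; lra.
  - apply Hfb; lra.
Qed.

Lemma conv_periodic (p : R) (V f : R -> R) :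
  periodic_with p V -> periodic_with p (conv V f).
Proof.
  intros HV x. unfold conv. f_equal. extensionality psi.
  replace (x + p - psi) with (x - psi + p) by ring. now rewrite HV.
Qed.

Lemma stationary_first_integral (D : R) (W f f1 f2 h : R -> R) :
  (forall x, derivable_pt_lim f1 x (f2 x)) ->
  (forall x, derivable_pt_lim (fun t => W t * f t) x (h x)) ->
  (forall x, D * f2 x + h x = 0) ->
  forall x y, D * f1 x + W x * f x = D * f1 y + W y * f y.
Proof.
  intros Hf1 Hh Heq.
  apply (zero_derivative_constant _ (fun x => D * f2 x + h x)); [| exact Heq].
  intro x.
  exact (derivable_pt_lim_plus _ _ x _ _ (derivable_pt_lim_scal f1 D x _ (Hf1 x)) (Hh x)).
Qed.

Lemma shift_difference_equation (D c : R) (W f f1 : R -> R) :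
  periodic_with c W ->
  (forall x y, D * f1 x + W x * f x = D * f1 y + W y * f y) ->
  forall x, D * (f1 (x + c) - f1 x) = - W x * (f (x + c) - f x).
Proof.
  intros HW Hfirst x. pose proof (Hfirst (x + c) x) as E. rewrite HW in E. lra.
Qed.

Lemma no_zero_constant_sign (u : R -> R) :
  continuity u -> (forall x, u x <> 0) -> forall x, 0 < u 0 * u x.
Proof.
  intros Hu Hne x.
  destruct (Rlt_le_dec 0 (u 0 * u x)) as [Hlt | Hle]; [exact Hlt | exfalso].
  destruct (Rle_dec 0 x) as [H0x | Hx0].
  - destruct (IVT_cor u 0 x Hu H0x Hle) as [z [_ Hz]]. exact (Hne z Hz).
  - rewrite Rmult_comm in Hle.
    destruct (IVT_cor u x 0 Hu ltac:(lra) Hle) as [z [_ Hz]]. exact (Hne z Hz).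
Qed.

(* If g is continuous and (n c)-periodic, then g(t + c) = g(t) for some t
   (step 3): the n shift differences along 0, c, ..., (n-1)c sum to zero. *)
Lemma shift_difference_vanishes (g : R -> R) (c : R) (n : nat) :
  continuity g -> (1 <= n)%nat -> periodic_with (INR n * c) g ->
  exists t, g (t + c) = g t.
Proof.
  intros Hg Hn Hper. apply NNPP. intro Hnone.
  set (u := fun x => g (x + c) - g x).
  assert (Hu : continuity u).
  { intro x. unfold u. apply continuity_pt_minus; [| apply Hg].
    change (continuity_pt (comp g (fun y => y + c)) x).
    apply continuity_pt_comp; [| apply Hg].
    apply continuity_pt_plus; [apply derivable_continuous_pt, derivable_pt_id |].
    apply continuity_pt_const. intros y z; reflexivity. }
  assert (Hne : forall x, u x <> 0).
  { intros x Hx. apply Hnone. exists x. unfold u in Hx. lra. }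
  assert (Hsign := no_zero_constant_sign u Hu Hne).
  assert (Hsum : forall k, 0 < u 0 * (g (INR (S k) * c) - g 0)).
  { induction k as [| k IH].
    - replace (INR 1 * c) with (0 + c) by (simpl; ring). exact (Hsign 0).
    - replace (INR (S (S k)) * c) with (INR (S k) * c + c)
        by (rewrite (S_INR (S k)); ring).
      set (x := INR (S k) * c) in *.
      pose proof (Hsign x) as Hk. unfold u in *.
      replace (g (x + c) - g 0) with ((g (x + c) - g x) + (g x - g 0)) by ring.
      rewrite Rmult_plus_distr_l. lra. }
  specialize (Hsum (n - 1)%nat). replace (S (n - 1)) with n in Hsum by lia.
  rewrite <- (Rplus_0_l (INR n * c)), Hper in Hsum. lra.
Qed.

Theorem mainTheorem11 (D : R) (n : nat) (V f : R -> R) :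
  0 < D -> (1 <= n)%nat ->
  on_circle V -> continuity V -> (forall x, V (- x) = - V x) ->
  periodic_with (/ INR n) V ->
  on_circle f -> (forall x, 0 <= f x) ->
  stationary_TP D V f ->
  IsInt f 0 1 1 ->
  periodic_with (/ INR n) f.
Proof.
  intros HD Hn _ HVc _ HVn Hf1 _ [f1 [f2 [h [[Hd1 [Hd2 _]] [Hh Heq]]]]] _.
  set (c := / INR n).
  assert (Hfc : continuity f) by exact (continuity_of_derivative f f1 Hd1).
  assert (Hode := shift_difference_equation D c (conv V f) f f1
                    (conv_periodic c V f HVn)
                    (stationary_first_integral D (conv V f) f f1 f2 h Hd2 Hh Heq)).
  assert (Hper : periodic_with (INR n * c) f).
  { unfold c. rewrite Rinv_r by (apply not_0_INR; lia). exact Hf1. }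
  destruct (shift_difference_vanishes f c n Hfc Hn Hper) as [t0 Ht0].
  intro x.
  assert (Hu : forall z, derivable_pt_lim (fun y => f (y + c) - f y) z (f1 (z + c) - f1 z))
    by (intro z; exact (derivable_pt_lim_minus _ _ z _ _
                          (derivable_pt_lim_shift f f1 c z Hd1) (Hd1 z))).
  assert (Hzero := linear_ode_zero D _ _ (conv V f) t0 HD Hu Hode
                     (fun a b Hab => conv_bounded V f a b HVc Hfc Hab)
                     ltac:(lra) x).
  lra.
Qed.
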